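(* Let $a,b$ be nonnegative integers and let $G$ be a finite group. If for every minimal normal subgroup $M$ of $G$ the quotient $G/M$ is sub-$(a,b)$-valent, then for every nontrivial normal subgroup $N$ of $G$ the quotient $G/N$ is sub-$(a,b)$-valent.
   Context: An involution is an element of order $2$. A subset $S$ of a group $G$ is a Cayley set of $G$ if $1\notin S$, $S$ is inverse-closed, and $S$ generates $G$. On pairs of nonnegative integers define $(a',b')\preccurlyeq(a,b)$ if and only if $b'\le b$ and $a'\le a+(b-b')/2$. A Cayley set is sub-$(a,b)$-valent if it consists of $a'$ involutions and $b'$ non-involutions with $(a',b')\preccurlyeq(a,b)$. A group is sub-$(a,b)$-valent if it has a sub-$(a,b)$-valent Cayley set. *)

From mathcomp Require Import all_boot all_fingroup.
From mathcomp Require Import gseries.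
Set Implicit Arguments. Unset Strict Implicit. Unset Printing Implicit Defensive.
Local Open Scope group_scope.

Definition cayley_set (gT : finGroupType) (H S : {set gT}) : Prop :=
  [/\ 1 \notin S, S^-1 = S & <<S>> = H].

Definition n_invol (gT : finGroupType) (S : {set gT}) : nat :=
  #|[set x in S | #[x] == 2]|.
Definition n_noninvol (gT : finGroupType) (S : {set gT}) : nat :=
  #|[set x in S | #[x] != 2]|.

(* (a',b') ≼ (a,b)  iff  b' <= b  and  a' <= a + (b-b')/2 (rational division),
   written without division as 2a' <= 2a + (b - b'). *)
Definition preceq (a' b' a b : nat) : Prop :=
  (b' <= b)%N /\ (2 * a' <= 2 * a + (b - b'))%N.

Definition sub_valent_set (gT : finGroupType) (a b : nat) (H S : {set gT}) : Prop :=
  cayley_set H S /\ preceq (n_invol S) (n_noninvol S) a b.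

Definition sub_valent (gT : finGroupType) (a b : nat) (H : {set gT}) : Prop :=
  exists S : {set gT}, sub_valent_set a b H S.

From mathcomp Require Import all_boot all_fingroup all_solvable zify.
From mathcomp Require Import gseries.
Set Implicit Arguments. Unset Strict Implicit. Unset Printing Implicit Defensive.
Local Open Scope group_scope.

(* Choose a minimal normal subgroup M of G inside N.  The natural map
   G/M -> G/N sends a Cayley set S of G/M onto a generating set of G/N, which
   is again a Cayley set once 1 is removed.  Counting an involution twice and
   a non-involution once, the (a,b)-order reads b' <= b and 2a' + b' <= 2a + b,
   and neither count grows under the map: a non-involution of the image comes
   from a non-involution of S, and an involution y of the image either has an
   involution above it or has two preimages x <> x^-1 in S. *)

Lemma preceqE (a' b' a b : nat) :
  preceq a' b' a b <-> (b' <= b)%N /\ (2 * a' + b' <= 2 * a + b)%N.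
Proof. by rewrite /preceq; split=> [] [le_b' le_a']; split=> //; lia. Qed.

Lemma preceq_trans (a'' b'' a' b' a b : nat) :
  preceq a'' b'' a' b' -> preceq a' b' a b -> preceq a'' b'' a b.
Proof. by rewrite !preceqE; lia. Qed.

Lemma order_eq2 (gT : finGroupType) (x : gT) :
  (#[x] %| 2)%N -> x != 1 -> #[x] = 2%N.
Proof. by move=> x_dvd2 ntx; apply/prime_nt_dvdP; rewrite ?order_eq1. Qed.

Lemma order_eq2_invg (gT : finGroupType) (x : gT) :
  x^-1 = x -> x != 1 -> #[x] = 2%N.
Proof. by move=> xV; apply: order_eq2; rewrite order_dvdn expgS expg1 -{1}xV mulVg. Qed.

Definition invol_weight (gT : finGroupType) (x : gT) : nat :=
  if #[x] == 2 then 2%N else 1%N.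

Lemma invol_weight_gt0 (gT : finGroupType) (x : gT) : (0 < invol_weight x)%N.
Proof. by rewrite /invol_weight; case: ifP. Qed.

Lemma sum_invol_weight (gT : finGroupType) (S : {set gT}) :
  (\sum_(x in S) invol_weight x = 2 * n_invol S + n_noninvol S)%N.
Proof.
rewrite (bigID (fun x => #[x] == 2)) /=.
rewrite (eq_bigr (fun _ => 2%N)); last by move=> x /andP[_ x2]; rewrite /invol_weight x2.
rewrite [X in (_ + X)%N](eq_bigr (fun _ => 1%N)); last first.
  by move=> x /andP[_ /negbTE xn2]; rewrite /invol_weight xn2.
rewrite !sum_nat_const /n_invol /n_noninvol mulnC muln1.
by congr (2 * _ + _)%N; apply: eq_card => x; rewrite !inE.
Qed.

Section CayleySetImage.

Variables (aT rT : finGroupType) (D : {group aT}) (phi : {morphism D >-> rT}).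
Variable S : {set aT}.
Hypotheses (sSD : S \subset D) (S1 : 1 \notin S) (SV : S^-1 = S).

Let T := (phi @: S) :\ 1.

Lemma invg_imsetD1 : T^-1 = T.
Proof.
suff TV y : y \in T -> y^-1 \in T.
  by apply/setP=> y; rewrite inE; apply/idP/idP => /TV; rewrite ?invgK.
case/setD1P=> nty /imsetP[x Sx y_eq]; subst y; rewrite !inE eq_invg1 nty /=.
by apply/imsetP; exists x^-1; rewrite -?morphV ?(subsetP sSD) // -SV inE invgK.
Qed.

Lemma n_noninvol_imsetD1 : (n_noninvol T <= n_noninvol S)%N.
Proof.
rewrite /n_noninvol; apply: leq_trans (leq_imset_card phi _).
apply/subset_leq_card/subsetP => y; rewrite !inE.
case/andP=> /andP[nty /imsetP[x Sx y_eq]] not2_y; subst y.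
apply/imsetP; exists x => //; rewrite inE Sx /=.
apply: contra not2_y => /eqP ord2_x; apply/eqP/order_eq2 => //.
by rewrite -ord2_x morph_order ?(subsetP sSD).
Qed.

Lemma invol_weight_fiber y : y \in T ->
  (invol_weight y <= \sum_(x in S | phi x == y) invol_weight x)%N.
Proof.
case/setD1P=> nty /imsetP[x Sx y_eq]; subst y.
have ntx : x != 1 by apply: contraNneq S1 => <-.
rewrite (bigD1 x) ?Sx ?eqxx //= {1}/invol_weight.
case: ifP => [/eqP ord2_phix | _]; last first.
  exact: leq_trans (invol_weight_gt0 x) (leq_addr _ _).
have [xV | xVnx] := eqVneq x^-1 x.
  by rewrite /invol_weight order_eq2_invg ?eqxx ?leq_addr.
have SxV : x^-1 \in S by rewrite -SV inE invgK.
rewrite (bigD1 x^-1) /=; last first.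
  by rewrite SxV xVnx morphV ?(subsetP sSD) // invg2id ?eqxx.
rewrite addnA; apply: leq_trans (leq_addr _ _).
exact: leq_add (invol_weight_gt0 x) (invol_weight_gt0 x^-1).
Qed.

Lemma sum_invol_weight_imsetD1 :
  (\sum_(y in T) invol_weight y <= \sum_(x in S) invol_weight x)%N.
Proof.
rewrite (partition_big_imset phi) /= [X in (_ <= X)%N](bigID (fun y => y != 1)) /=.
apply: leq_trans (leq_addr _ _).
rewrite [X in (_ <= X)%N](eq_bigl (mem T)) => [|y]; last by rewrite !inE andbC.
exact: leq_sum invol_weight_fiber.
Qed.

Lemma preceq_imsetD1 :
  preceq (n_invol T) (n_noninvol T) (n_invol S) (n_noninvol S).
Proof.
rewrite preceqE -!sum_invol_weight.
by split; [apply: n_noninvol_imsetD1 | apply: sum_invol_weight_imsetD1].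
Qed.

End CayleySetImage.

Lemma sub_valent_morphim (a b : nat) (aT rT : finGroupType) (D : {group aT})
    (phi : {morphism D >-> rT}) (H : {set aT}) :
  H \subset D -> sub_valent a b H -> sub_valent a b (phi @* H).
Proof.
move=> sHD [S [[S1 SV genS] precS]].
have sSD : S \subset D by rewrite (subset_trans _ sHD) // -genS subset_gen.
exists ((phi @: S) :\ 1); split; first split.
- by rewrite !inE eqxx.
- exact: invg_imsetD1.
- by rewrite genD1id -morphimEsub // -morphim_gen // genS.
- exact: preceq_trans (preceq_imsetD1 _ sSD S1 SV) precS.
Qed.

Theorem lemma3p1 (a b : nat) (gT : finGroupType) (G : {group gT}) :
  (forall M : {group gT}, minnormal M G -> sub_valent a b (G / M)%g) ->
  forall N : {group gT}, N <| G -> N :!=: 1%g -> sub_valent a b (G / N)%g.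
Proof.
move=> sub_valent_min N nsNG ntN.
have [M minM sMN] := minnormal_exists ntN (normal_norm nsNG).
have /andP[_ nMG] := mingroupp minM.
pose toGN := restrm (normal_norm nsNG) (coset N).
have kerM_toGN : 'ker (coset M) \subset 'ker toGN.
  by rewrite ker_restrm !ker_coset subsetI sMN (subset_trans sMN (normal_sub nsNG)).
have -> : G / N = factm kerM_toGN nMG @* (G / M).
  by rewrite morphim_factm morphim_restrm setIid.
exact: sub_valent_morphim (sub_valent_min M minM).
Qed.
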